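(* Let $G$ be a finite abelian group, $\Phi$ a normalized $3$-cocycle on $G$, $V\in{}^{\mathbbm{k}G}_{\mathbbm{k}G}\mathcal{YD}^{\Phi}$, $H=G_V$ and $\Psi=\Phi|_H$. Then there is an object $U$ of ${}^{\mathbbm{k}H}_{\mathbbm{k}H}\mathcal{YD}^{\Psi}$ such that $B(V)\cong B(U)$.
   Context: $\mathbbm{k}$ is algebraically closed of characteristic zero. For a finite abelian group $K$, a normalized 3-cocycle $\Phi$ and $g\in K$, $\widetilde{\Phi}_g(x,y)=\frac{\Phi(g,x,y)\Phi(x,y,g)}{\Phi(x,g,y)}$. The braided tensor category ${}^{\mathbbm{k}K}_{\mathbbm{k}K}\mathcal{YD}^{\Phi}$ has objects the $K$-graded spaces $V=\bigoplus_gV_g$ (grading = left coaction) with operators $e\triangleright-$ preserving each $V_g$, $1\triangleright v=v$, $e\triangleright(f\triangleright v)=\widetilde{\Phi}_g(e,f)(ef)\triangleright v$ for $v\in V_g$; tensor product: degree $gh$, $e\triangleright(X\otimes Y)=\widetilde{\Phi}_e(g,h)(e\triangleright X)\otimes(e\triangleright Y)$; associator $(X\otimes Y)\otimes Z\mapsto\Phi(e,f,g)^{-1}X\otimes(Y\otimes Z)$; braiding $X\otimes Y\mapsto(e\triangleright Y)\otimes X$. A simple object $V$ is concentrated in one degree $g_V$; the support group $G_V$ of $V=\bigoplus_iV_i$ ($V_i$ simple) is the subgroup generated by the $g_{V_i}$. The Nichols algebra $B(V)=T_\Phi(V)/I$ (tensor algebra in the category modulo the unique maximal graded Hopf ideal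 generated by elements of degree $\ge2$). Two Nichols algebras $B(V)$, $B(U)$ (possibly over different base groups and cocycles) with $\dim V=\dim U=l$ are isomorphic if there is a $\mathbb{Z}^l$-graded linear isomorphism $B(V)\to B(U)$ preserving multiplication and comultiplication. *)

From HB Require Import structures.
From mathcomp Require Import all_boot all_order all_fingroup all_algebra.
Set Implicit Arguments. Unset Strict Implicit. Unset Printing Implicit Defensive.
Import GRing.Theory.
Local Open Scope ring_scope.

Definition normalized_3cocycle (k : fieldType) (gT : finGroupType)
    (K : {set gT}) (Phi : gT -> gT -> gT -> k) : Prop :=
  [/\ (forall e f g, e \in K -> f \in K -> g \in K -> Phi e f g != 0),
      (forall e f, e \in K -> f \in K ->
         [/\ Phi 1%g e f = 1, Phi e 1%g f = 1 & Phi e f 1%g = 1]) &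
      (forall e f g h, e \in K -> f \in K -> g \in K -> h \in K ->
         Phi (e * f)%g g h * Phi e f (g * h)%g
         = Phi e f g * Phi e (f * g)%g h * Phi f g h)].

Definition tPhi (k : fieldType) (gT : finGroupType)
    (Phi : gT -> gT -> gT -> k) (g x y : gT) : k :=
  Phi g x y * Phi x y g / Phi x g y.

(* ---------- objects of YD^Phi over K, of dimension l ----------
   An object is given by a homogeneous basis v_0..v_{l-1}: v_i has degree
   deg i, and e |> v_j = \sum_i act e i j v_i. *)
Definition yd_obj (k : fieldType) (gT : finGroupType) (K : {set gT})
    (Phi : gT -> gT -> gT -> k) (l : nat)
    (deg : 'I_l -> gT) (act : gT -> 'M[k]_l) : Prop :=
  [/\ (forall i, deg i \in K),
      (forall e, e \in K -> forall i j, deg i != deg j -> act e i j = 0),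
      act 1%g = 1%:M &
      (forall e f, e \in K -> f \in K -> forall i j,
          (act e *m act f) i j = tPhi Phi (deg j) e f * act (e * f)%g i j)].

Definition support_group (gT : finGroupType) (l : nat) (deg : 'I_l -> gT)
  : {set gT} := <<[set deg i | i in 'I_l]>>%g.

Section Tensor.
Variables (k : fieldType) (gT : finGroupType) (l : nat).
Variables (Phi : gT -> gT -> gT -> k) (deg : 'I_l -> gT) (act : gT -> 'M[k]_l).

Definition word := seq 'I_l.
(* elements of T(V): coefficient functions on the basis words
   v_{w_1} (x) ... (x) v_{w_n} (left-normed bracketing) *)
Definition tens := word -> k.
Definition tens2 := word -> word -> k.

Definition finsupp (x : tens) : Prop :=
  exists N : nat, forall w : word, (N <= size w)%N -> x w = 0.
Definition finsupp2 (z : tens2) : Prop :=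
  exists N : nat, forall p q : word, (N <= size p + size q)%N -> z p q = 0.

Definition wdeg (w : word) : gT := (\prod_(i <- w) deg i)%g.

(* multiplication of basis words: a . b = cm a b (a ++ b), obtained by
   re-bracketing a (x) b with the associator *)
Fixpoint cm_aux (x g : gT) (b : word) : k :=
  match b with
  | [::] => 1
  | i :: b' => Phi x g (deg i) * cm_aux x (g * deg i)%g b'
  end.
Definition cm (a b : word) : k := cm_aux (wdeg a) 1%g b.

Definition tmul (x y : tens) : tens := fun w =>
  \sum_(i < (size w).+1) cm (take i w) (drop i w) * x (take i w) * y (drop i w).

Definition tadd (x y : tens) : tens := fun w => x w + y w.
Definition tsub (x y : tens) : tens := fun w => x w - y w.
Definition tscale (c : k) (x : tens) : tens := fun w => c * x w.
Definition tzero : tens := fun _ => 0.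
Definition hcomp (n : nat) (x : tens) : tens :=
  fun w => if size w == n then x w else 0.

(* action of e on tensor powers: coefficient of word u in e |> w,
   using e |> (X (x) Y) = tPhi_e(g,h) (e|>X) (x) (e|>Y) *)
Fixpoint actw_aux (e g : gT) (u w : word) : k :=
  match u, w with
  | [::], [::] => 1
  | i :: u', j :: w' =>
      tPhi Phi e g (deg j) * act e i j * actw_aux e (g * deg j)%g u' w'
  | _, _ => 0
  end.
Definition actw (e : gT) (u w : word) : k := actw_aux e 1%g u w.

(* product in the algebra T (x) T of basis elements (a (x) b).(a' (x) b'):
   (m (x) m) o a^{-1} o (id (x) a) o (id (x) (c (x) id)) o (id (x) a^{-1}) o a,
   which on homogeneous elements equals
   sigma * (a . (deg b |> a')) (x) (b . b'). *)
Definition sigma (x y x' y' : gT) : k :=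
  Phi y x' y' * Phi x x' (y * y')%g / (Phi x y (x' * y')%g * Phi x' y y').

Definition prod2 (a b a' b' p q : word) : k :=
  if [&& size p == (size a + size a')%N, take (size a) p == a & q == b ++ b']
  then let u := drop (size a) p in
       sigma (wdeg a) (wdeg b) (wdeg a') (wdeg b')
       * cm a u * cm b b' * actw (wdeg b) u a'
  else 0.

(* Delta on basis words: the algebra map with Delta(v) = v (x) 1 + 1 (x) v.
   Since a basis word w ++ [:: j] equals the product w . v_j, we recurse on
   the reversed word. *)
Fixpoint Drev (r : word) : tens2 :=
  match r with
  | [::] => fun p q => ((p == [::]) && (q == [::]))%:R
  | j :: r' => fun p q =>
      \sum_(i < (size r').+1) \sum_(a : i.-tuple 'I_l)
        \sum_(b : (size r' - i).-tuple 'I_l)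
          Drev r' a b * (prod2 a b [:: j] [::] p q + prod2 a b [::] [:: j] p q)
  end.
Definition Dw (w : word) : tens2 := Drev (rev w).

Definition tDelta (x : tens) : tens2 := fun p q =>
  \sum_(w : (size p + size q).-tuple 'I_l) x w * Dw w p q.

Definition in_JT (J : tens -> Prop) (z : tens2) : Prop :=
  exists (n : nat) (x y : 'I_n -> tens),
    (forall i, [/\ finsupp (x i), finsupp (y i) & (J (x i) \/ J (y i))]) /\
    (forall p q, z p q = \sum_(i < n) x i p * y i q).

Definition graded_hopf_ideal_ge2 (J : tens -> Prop) : Prop :=
  [/\ (forall x, J x -> finsupp x),
      (J tzero /\ (forall x y, J x -> J y -> J (tadd x y)) /\
        (forall c x, J x -> J (tscale c x))),
      (forall x y, J x -> finsupp y -> J (tmul x y) /\ J (tmul y x)),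
      (forall x n, J x -> J (hcomp n x)) /\
      (forall x w, J x -> (size w < 2)%N -> x w = 0) &
      (forall x, J x -> in_JT J (tDelta x))].

(* the maximal such ideal I (the union = sum of all of them);
   B(V) = T_Phi(V) / nichols_ideal *)
Definition nichols_ideal (x : tens) : Prop :=
  exists J, graded_hopf_ideal_ge2 J /\ J x.

End Tensor.

(* Z^l-degree of a word = its multiset of letters; two words have the same
   Z^l-degree iff perm_eq. *)

(* B(V) ~= B(U) (V over (K1,Phi1), U over (K2,Phi2), both of dimension l):
   a Z^l-graded linear isomorphism B(V) -> B(U) preserving multiplication and
   comultiplication, presented through a Z^l-graded lift F : T(V) -> T(U),
   F w u = coefficient of the word u in F(w). *)
Definition nichols_iso (k : fieldType) (gT1 gT2 : finGroupType) (l : nat)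
    (Phi1 : gT1 -> gT1 -> gT1 -> k) (deg1 : 'I_l -> gT1) (act1 : gT1 -> 'M[k]_l)
    (Phi2 : gT2 -> gT2 -> gT2 -> k) (deg2 : 'I_l -> gT2) (act2 : gT2 -> 'M[k]_l)
  : Prop :=
  let IV := nichols_ideal Phi1 deg1 act1 in
  let IU := nichols_ideal Phi2 deg2 act2 in
  exists F : word l -> word l -> k,
    let appF (x : tens k l) : tens k l := fun u =>
      \sum_(w : (size u).-tuple 'I_l) F w u * x w in
    let appFF (z : tens2 k l) : tens2 k l := fun p q =>
      \sum_(a : (size p).-tuple 'I_l) \sum_(b : (size q).-tuple 'I_l)
         F a p * F b q * z a b in
    [/\ (forall w u, F w u != 0 -> perm_eq w u),
        (forall x, IV x -> IU (appF x)) /\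
        (forall x, finsupp x -> IU (appF x) -> IV x),
        (forall y, finsupp y -> exists x, finsupp x /\ IU (tsub y (appF x))),
        (forall x y, finsupp x -> finsupp y ->
           IU (tsub (tmul Phi2 deg2 (appF x) (appF y))
                    (appF (tmul Phi1 deg1 x y)))) &
        (forall x, finsupp x ->
           in_JT IU (fun p q => tDelta Phi2 deg2 act2 (appF x) p q
                                - appFF (tDelta Phi1 deg1 act1 x) p q))].

(* The Nichols algebra of V only involves the associator and the braiding on
   tensor powers of V, hence only the values of Phi and of the action at
   products of degrees of V, which all lie in the support group G_V.  So V
   itself, with its action restricted to G_V, is an object U over (G_V, Phi|G_V)
   with the same tensor algebra, the same ideal and the same coproduct, and the
   identity on words induces B(V) = B(U). *)
From Stdlib Require Import FunctionalExtensionality.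
From HB Require Import structures.
From mathcomp Require Import all_boot all_order all_fingroup all_algebra.
Import GRing.Theory.
Local Open Scope ring_scope.

Lemma yd_objS (k : fieldType) (gT : finGroupType) (H K : {set gT})
    (Phi : gT -> gT -> gT -> k) (l : nat) (deg : 'I_l -> gT)
    (act : gT -> 'M[k]_l) :
  H \subset K -> (forall i, deg i \in H) ->
  yd_obj K Phi deg act -> yd_obj H Phi deg act.
Proof.
move=> /subsetP sHK degH [_ act_homog act1 actM]; split=> //.
- by move=> e /sHK; apply: act_homog.
- by move=> e f /sHK eK /sHK fK; apply: actM.
Qed.

Lemma mem_support_group (gT : finGroupType) (l : nat) (deg : 'I_l -> gT) i :
  deg i \in support_group deg.
Proof. by apply: mem_gen; apply: imset_f. Qed.

Lemma support_group_sub (gT : finGroupType) (G : {group gT}) (l : nat)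
    (deg : 'I_l -> gT) :
  (forall i, deg i \in G) -> support_group deg \subset G.
Proof.
by move=> degG; rewrite gen_subG; apply/subsetP => _ /imsetP[i _ ->].
Qed.

Section IdentityIso.
Variables (k : fieldType) (gT : finGroupType) (l : nat).
Variables (Phi : gT -> gT -> gT -> k) (deg : 'I_l -> gT) (act : gT -> 'M[k]_l).

Definition null_tens (x : tens k l) : Prop := forall w, x w = 0.

Lemma in_JT_null (J : tens k l -> Prop) (z : tens2 k l) :
  (forall p q, z p q = 0) -> in_JT J z.
Proof.
move=> z0; exists 0%N, (fun _ => @tzero k l), (fun _ => @tzero k l).
by split=> [[]//|p q]; rewrite z0 big_ord0.
Qed.

Lemma graded_hopf_ideal_null : graded_hopf_ideal_ge2 Phi deg act null_tens.
Proof.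
split.
- by move=> x x0; exists 0%N => w _; apply: x0.
- split=> [//|]; split=> [x y x0 y0 w|c x x0 w].
  + by rewrite /tadd x0 y0 addr0.
  + by rewrite /tscale x0 mulr0.
- move=> x y x0 _; split=> w; rewrite /tmul big1 // => i _.
  + by rewrite x0 mulr0 mul0r.
  + by rewrite x0 mulr0.
- by split=> [x n x0 w|x w x0 _]; [rewrite /hcomp x0; case: ifP | apply: x0].
- move=> x x0; apply: in_JT_null => p q.
  by rewrite /tDelta big1 // => w _; rewrite x0 mul0r.
Qed.

Lemma nichols_ideal_null (x : tens k l) :
  null_tens x -> nichols_ideal Phi deg act x.
Proof. by exists null_tens; split=> //; apply: graded_hopf_ideal_null. Qed.

Lemma sum_tuple_delta (u : word l) (f : word l -> k) :
  \sum_(w : (size u).-tuple 'I_l) (((w : word l) == u)%:R * f w) = f u.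
Proof.
rewrite (bigD1 (in_tuple u)) //= eqxx mul1r big1 ?addr0 // => w /negPf neq_wu.
by rewrite (_ : (_ == u) = false) ?mul0r.
Qed.

Lemma sum_tuple_delta2 (p q : word l) (z : tens2 k l) :
  \sum_(a : (size p).-tuple 'I_l) \sum_(b : (size q).-tuple 'I_l)
    (((a : word l) == p)%:R * ((b : word l) == q)%:R * z a b) = z p q.
Proof.
rewrite -[RHS](sum_tuple_delta p (z ^~ q)); apply: eq_bigr => a _.
rewrite -(sum_tuple_delta q (fun b => ((a : word l) == p)%:R * z a b)).
by apply: eq_bigr => b _; rewrite mulrCA mulrA.
Qed.

Lemma nichols_iso_refl : nichols_iso Phi deg act Phi deg act.
Proof.
exists (fun w u => ((w == u) : bool)%:R) => /=.
have appF_id (x : tens k l) :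
    (fun u => \sum_(w : (size u).-tuple 'I_l) (((w : word l) == u)%:R * x w)) = x.
  by apply: functional_extensionality => u; apply: sum_tuple_delta.
split.
- by move=> w u; have [->|] := eqVneq w u; rewrite ?eqxx.
- by split=> x; rewrite appF_id.
- move=> y fin_y; exists y; split=> //.
  by apply: nichols_ideal_null => w; rewrite appF_id /tsub subrr.
- move=> x y _ _; rewrite !appF_id.
  by apply: nichols_ideal_null => w; rewrite /tsub subrr.
- move=> x _; rewrite appF_id; apply: in_JT_null => p q.
  by rewrite sum_tuple_delta2 subrr.
Qed.

End IdentityIso.

Theorem corollary3p5 (k : closedFieldType) (hk : [pchar k] =i pred0)
    (gT : finGroupType) (G : {group gT}) (hG : abelian G)
    (Phi : gT -> gT -> gT -> k) (hPhi : normalized_3cocycle G Phi)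
    (l : nat) (deg : 'I_l -> gT) (act : gT -> 'M[k]_l)
    (hV : yd_obj G Phi deg act) :
  exists (degU : 'I_l -> gT) (actU : gT -> 'M[k]_l),
    yd_obj (support_group deg) Phi degU actU /\
    nichols_iso Phi deg act Phi degU actU.
Proof.
have [degG _ _ _] := hV.
exists deg, act; split; last exact: nichols_iso_refl.
apply: yd_objS hV; first exact: support_group_sub.
exact: mem_support_group.
Qed.
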